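(* Suppose $e>1$. For Serre weights $V_{\vec t,\vec s},V_{\vec{t'},\vec{s'}}$, consider the inflation–restriction exact sequence $$0\to H^1(\Gamma,V_{\vec t,\vec s}^\vee\otimes V_{\vec{t'},\vec{s'}})\xrightarrow{\mathrm{inf}}H^1(\mathcal K/\mathcal K_2,V_{\vec t,\vec s}^\vee\otimes V_{\vec{t'},\vec{s'}})\xrightarrow{\mathrm{res}}H^1(\mathcal K_1/\mathcal K_2,V_{\vec t,\vec s}^\vee\otimes V_{\vec{t'},\vec{s'}})^\Gamma.$$ Then the map $\mathrm{res}$ is a split surjection.
   Context: $p$ prime, $K/\mathbb Q_p$ finite with ring of integers $\mathcal O_K$, uniformizer $\pi$, residue field $k$, $f=[k:\mathbb F_p]$, ramification index $e$; $\overline{\mathbb F}$ an algebraic closure of $\mathbb F_p$; fix $\sigma_{f-1}:k\to\overline{\mathbb F}$, $\sigma_{f-1-i}=\sigma_{f-1}^{p^i}$. Serre weight: $V_{\vec t,\vec s}=\bigotimes_{i=0}^{f-1}(\det^{t_i}\otimes\mathrm{Sym}^{s_i}k^2)\otimes_{k,\sigma_i}\overline{\mathbb F}$ with $s_i\in[0,p-1]$. $\Gamma=\mathrm{GL}_2(k)\cong\mathcal K/\mathcal K_1$, $\mathcal K=\mathrm{GL}_2(\mathcal O_K)$, $\mathcal K_n=1+\pi^nM_2(\mathcal O_K)$; representations of $\Gamma$ are regarded as representations of $\mathcal K/\mathcal K_2$ by inflation; $V^\vee$ denotes the dual. *)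

From HB Require Import structures.
From mathcomp Require Import all_boot all_order all_fingroup all_algebra.
Set Implicit Arguments. Unset Strict Implicit. Unset Printing Implicit Defensive.
Import GRing.Theory.
Local Open Scope ring_scope.

(* O_K / pi^2 for e > 1 : the dual numbers k[eps]/(eps^2) = k[X]/(X^2).     *)
Definition dualnum (k : finFieldType) := {poly %/ ('X^2 : {poly k})}.
HB.instance Definition _ (k : finFieldType) := GRing.ComUnitRing.on (dualnum k).
HB.instance Definition _ (k : finFieldType) := Finite.on (dualnum k).

(* K / K_2 = GL_2(O_K / pi^2) *)
Definition GL2mod2 (k : finFieldType) := {'GL_2[dualnum k]}.

(* reduction O_K/pi^2 -> k (constant coefficient) and K/K_2 -> Gamma *)
Definition red_scalar (k : finFieldType) (a : dualnum k) : k := (a : {poly k})`_0.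
Definition red (k : finFieldType) (g : GL2mod2 k) : 'M[k]_2 :=
  map_mx (@red_scalar k) (GLval g).

Definition K1modK2 (k : finFieldType) : {set GL2mod2 k} :=
  [set g | red g == 1%:M].

Definition i1 : 'I_2 := @Ordinal 2 1 (erefl true).

(* sigma_i = sigma_{f-1}^{p^{f-1-i}} *)
Definition sigma_i (k : finFieldType) (F : fieldType) (sigma : {rmorphism k -> F})
  (p f : nat) (i : 'I_f) (x : k) : F := sigma x ^+ (p ^ (f.-1 - i)).

(* Sym^s of the standard representation, basis e1^(s-j) e2^j <-> X^j:
   entry (l, j) of the matrix of [[a,b],[c,d]] is the coefficient of X^l in
   (a + c X)^(s-j) (b + d X)^j. *)
Definition symcoef (F : fieldType) (s j l : nat) (a b c d : F) : F :=
  (((a%:P + c%:P * 'X) ^+ (s - j)) * ((b%:P + d%:P * 'X) ^+ j))`_l.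

(* basis index set of (x)_i Sym^{s_i}: multi-indices j with j_i <= s_i *)
Definition SWidx (p f : nat) (s : 'I_f -> 'I_p) : finType :=
  {j : {ffun 'I_f -> 'I_p} | [forall i, (j i <= s i)%N]}.

(* matrix coefficient (l, j) of V_{t,s} = (x)_i (det^{t_i} (x) Sym^{s_i} k^2) (x)_{k,sigma_i} F *)
Definition rhoSW (k : finFieldType) (F : fieldType) (sigma : {rmorphism k -> F})
  (p f : nat) (t : 'I_f -> int) (s : 'I_f -> 'I_p) (g : 'M[k]_2)
  (l j : SWidx s) : F :=
  \prod_(i < f)
    ((sigma_i sigma p i (\det g)) ^ (t i) *
     symcoef (s i) (val j i) (val l i)
       (sigma_i sigma p i (g ord0 ord0)) (sigma_i sigma p i (g ord0 i1))
       (sigma_i sigma p i (g i1 ord0)) (sigma_i sigma p i (g i1 i1))).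
Arguments rhoSW {k F} sigma {p f} t s g l j.

(* V_{t,s}^dual (x) V_{t',s'} realised as Hom_F(V_{t,s}, V_{t',s'}),
   i.e. matrices indexed by (SWidx s') * (SWidx s). *)
Notation HomSW F s s' := {ffun (SWidx s' * SWidx s) -> F^o}.
HB.instance Definition _ (k : finFieldType) := FinGroup.on (GL2mod2 k).

Definition actHom (k : finFieldType) (F : fieldType) (sigma : {rmorphism k -> F})
  (p f : nat) (t t' : 'I_f -> int) (s s' : 'I_f -> 'I_p)
  (g : GL2mod2 k) (phi : HomSW F s s') : HomSW F s s' :=
  [ffun x => \sum_(l' : SWidx s') \sum_(l : SWidx s)
      rhoSW sigma t' s' (red g) x.1 l' * phi (l', l) *
      rhoSW sigma t s (red (g^-1)%g) l x.2].
Arguments actHom {k F} sigma {p f} t t' s s' g phi.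

Section Cohomology.
Variables (gT : finGroupType) (R : nzRingType) (W : lmodType R).
Variable act : gT -> W -> W.

Definition cocycle1 (H : {set gT}) (c : {ffun gT -> W}) : Prop :=
  forall g h, g \in H -> h \in H -> c (g * h)%g = c g + act g (c h).

Definition coboundary1 (H : {set gT}) (c : {ffun gT -> W}) : Prop :=
  exists w : W, forall g, g \in H -> c g = act g w - w.

Definition conj_cochain (g : gT) (c : {ffun gT -> W}) : {ffun gT -> W} :=
  [ffun n => act g (c (g^-1 * n * g)%g)].

(* the class of the N-cocycle c in H^1(N, W) is fixed by G (i.e. by G/N) *)
Definition invariant_class (G N : {set gT}) (c : {ffun gT -> W}) : Prop :=
  forall g, g \in G -> coboundary1 N (conj_cochain g c - c).

(* res : H^1(G, W) -> H^1(N, W)^{G/N} is a split surjection: there is an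
   R-linear map s : H^1(N,W)^{G/N} -> H^1(G,W) with res o s = id.
   Classes are represented by cocycles; s is given on invariant cocycles,
   must be linear, send cocycles to cocycles, send coboundaries to
   coboundaries (so it descends to H^1), and res(s c) = c in H^1(N, W). *)
Definition res_split_surjective (G N : {set gT}) : Prop :=
  exists s : {ffun gT -> W} -> {ffun gT -> W},
    [/\ forall (a : R) c1 c2,
          cocycle1 N c1 -> invariant_class G N c1 ->
          cocycle1 N c2 -> invariant_class G N c2 ->
          s (a *: c1 + c2) = a *: s c1 + s c2,
        forall c, cocycle1 N c -> invariant_class G N c -> cocycle1 G (s c),
        forall c, cocycle1 N c -> invariant_class G N c ->
          coboundary1 N c -> coboundary1 G (s c) &
        forall c, cocycle1 N c -> invariant_class G N c ->
          coboundary1 N (s c - c)].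
End Cohomology.

(* Since e > 1, K/K_2 = GL_2(O_K/pi^2) with O_K/pi^2 = k[eps]/(eps^2), and the
   constant embedding k -> k[eps] gives a homomorphic section L of the reduction
   K/K_2 -> Gamma, so that K/K_2 = K_1/K_2 x| L(Gamma).  The coefficient module is
   inflated from Gamma, hence K_1/K_2 acts trivially and g acts as L g.  A
   K_1/K_2-cocycle c with invariant class then extends to K/K_2 by
   g |-> c (g L(g)^-1): invariance says c (L g x L(g)^-1) = g . c x, which is
   exactly the cocycle identity for the extension, and the extension restricts
   back to c.  Nothing is used about F or k beyond p > 0. *)
From HB Require Import structures.
From mathcomp Require Import all_boot all_order all_fingroup all_algebra.
Set Implicit Arguments. Unset Strict Implicit. Unset Printing Implicit Defensive.
Import GRing.Theory.
Local Open Scope ring_scope.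

Section SplitRestriction.
Variables (gT : finGroupType) (R : nzRingType) (W : lmodType R).
Variables (act : gT -> W -> W) (N : {set gT}) (L : {morphism [set: gT] >-> gT}).
Hypothesis L_N : {in N, forall n, L n = 1%g}.
Hypothesis mulgV_L : forall g, (g * (L g)^-1)%g \in N.
Hypothesis act_N : {in N, forall n w, act n w = w}.
Hypothesis act_L : forall g, act (L g) =1 act g.
Hypothesis act0 : forall g, act g 0 = 0.

Lemma mem_retraction_ker x : (x \in N) = (L x == 1%g).
Proof.
apply/idP/eqP => [/L_N // | Lx1].
by have := mulgV_L x; rewrite Lx1 invg1 mulg1.
Qed.

Lemma conj_retraction_mem g n : n \in N -> (L g * n * (L g)^-1)%g \in N.
Proof.
rewrite !mem_retraction_ker => /eqP Ln1.
by rewrite !morphM ?inE // Ln1 mulg1 -morphM ?inE // mulgV morph1.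
Qed.

Lemma coboundary1_trivial (c : {ffun gT -> W}) :
  coboundary1 act N c -> {in N, forall n, c n = 0}.
Proof. by move=> [w cE] n Nn; rewrite cE // act_N // subrr. Qed.

Lemma coboundary1_vanishing (H : {set gT}) (c : {ffun gT -> W}) :
  {in H, forall g, c g = 0} -> coboundary1 act H c.
Proof. by move=> c0; exists 0 => g Hg; rewrite c0 // act0 subrr. Qed.

Lemma invariant_class_conj (c : {ffun gT -> W}) g x :
  invariant_class act [set: gT] N c -> x \in N -> c (L g * x * (L g)^-1)%g = act g (c x).
Proof.
move=> c_inv Nx; set y := (L g * x * (L g)^-1)%g.
have Ny : y \in N by exact: conj_retraction_mem.
have := coboundary1_trivial (c_inv (L g) (in_setT _)) Ny.
rewrite !ffunE /y !mulgA mulVg mul1g mulgKV act_L.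
by move/eqP; rewrite subr_eq0 => /eqP.
Qed.

Definition extend_cochain (c : {ffun gT -> W}) : {ffun gT -> W} :=
  [ffun g => c (g * (L g)^-1)%g].

Lemma extend_cochainE (c : {ffun gT -> W}) n :
  n \in N -> extend_cochain c n = c n.
Proof. by move=> Nn; rewrite ffunE L_N // invg1 mulg1. Qed.

Lemma extend_cochain_cocycle (c : {ffun gT -> W}) : cocycle1 act N c ->
  invariant_class act [set: gT] N c -> cocycle1 act [set: gT] (extend_cochain c).
Proof.
move=> c_cocycle c_inv g h _ _; rewrite !ffunE.
have -> : (g * h * (L (g * h))^-1 =
           (g * (L g)^-1) * (L g * (h * (L h)^-1) * (L g)^-1))%g.
  by rewrite morphM ?inE // invMg !mulgA mulgKV.
rewrite c_cocycle ?conj_retraction_mem // act_N //.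
by rewrite invariant_class_conj.
Qed.

Theorem res_split_surjective_retraction : res_split_surjective act [set: gT] N.
Proof.
exists extend_cochain; split.
- by move=> a c1 c2 *; apply/ffunP => g; rewrite !ffunE.
- by move=> c; exact: extend_cochain_cocycle.
- move=> c _ _ /coboundary1_trivial c0; apply: coboundary1_vanishing => g _.
  by rewrite ffunE c0.
- move=> c _ _; apply: coboundary1_vanishing => n Nn.
  by rewrite ffunE extend_cochainE // ffunE subrr.
Qed.

End SplitRestriction.

Section DualNumbers.
Variable k : finFieldType.
Local Notation D := (dualnum k).

Lemma red_scalarM (a b : D) : red_scalar (a * b) = red_scalar a * red_scalar b.
Proof.
rewrite /red_scalar poly_of_qpolyM [X in Pdiv.Ring.rmodp _ X]mk_monic_Xn.
by rewrite -Pdiv.RingMonic.take_poly_rmodp coef_take_poly coef0M.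
Qed.

Lemma red_scalar_is_zmod_morphism : zmod_morphism (@red_scalar k).
Proof. by move=> a b; rewrite /red_scalar /= coefB. Qed.

Lemma red_scalar_is_monoid_morphism : monoid_morphism (@red_scalar k).
Proof. by split; [rewrite /red_scalar /= coefC | exact: red_scalarM]. Qed.

HB.instance Definition _ := GRing.isZmodMorphism.Build D k (@red_scalar k)
  red_scalar_is_zmod_morphism.
HB.instance Definition _ := GRing.isMonoidMorphism.Build D k (@red_scalar k)
  red_scalar_is_monoid_morphism.

Lemma red_scalar_qpolyC (x : k) : red_scalar (qpolyC _ x : D) = x.
Proof. by rewrite /red_scalar qpolyCE coefC. Qed.

Local Notation G := (GL2mod2 k).

Lemma redM (g h : G) : red (g * h)%g = red g *m red h.
Proof. by rewrite /red GL_MxE map_mxM. Qed.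

Lemma red1 : red (1%g : G) = 1%:M.
Proof. by rewrite /red GL_1E map_mx1. Qed.

Lemma eq_red_invg (g h : G) : red g = red h -> red (g^-1)%g = red (h^-1)%g.
Proof.
move=> gh; rewrite -[red _]mulmx1 -red1 -(mulgV h) redM mulmxA -gh -redM.
by rewrite mulVg red1 mul1mx.
Qed.

Definition lift_mx (g : G) : 'M[D]_2 := map_mx (qpolyC _) (red g).

Lemma lift_mx_unit (g : G) : lift_mx g \in unitmx.
Proof.
suff /mulmx1_unit[] : lift_mx g *m lift_mx (g^-1)%g = 1%:M by [].
by rewrite /lift_mx -map_mxM -redM mulgV red1 map_mx1.
Qed.

Definition liftGL (g : G) : G := FinRing.Unit (lift_mx_unit g).

Lemma red_liftGL (g : G) : red (liftGL g) = red g.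
Proof. by apply/matrixP => i j; rewrite /red !mxE red_scalar_qpolyC. Qed.

Lemma liftGLM : {morph liftGL : g h / (g * h)%g}.
Proof. by move=> g h; apply: val_inj; rewrite /= /lift_mx redM map_mxM. Qed.

Canonical liftGL_morphism := Morphism (in2W liftGLM : {in [set: G] &, _}).

Lemma liftGL_K1 (n : G) : n \in K1modK2 k -> liftGL n = 1%g.
Proof.
by rewrite inE => /eqP n1; apply: val_inj; rewrite /= /lift_mx n1 map_mx1.
Qed.

Lemma mulgV_liftGL_K1 (g : G) : (g * (liftGL g)^-1)%g \in K1modK2 k.
Proof.
rewrite inE redM (eq_red_invg (red_liftGL g)) -redM mulgV red1.
exact: eqxx.
Qed.

End DualNumbers.

Section SerreWeightAction.
Variables (k : finFieldType) (F : fieldType) (sigma : {rmorphism k -> F}).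
Variables (p f : nat) (p_gt0 : (0 < p)%N).
Variables (t t' : 'I_f -> int) (s s' : 'I_f -> 'I_p).

Lemma sigma_i0 (i : 'I_f) : sigma_i sigma p i 0 = 0.
Proof. by rewrite /sigma_i rmorph0 expr0n expn_eq0 (gtn_eqF p_gt0). Qed.

Lemma sigma_i1 (i : 'I_f) : sigma_i sigma p i 1 = 1.
Proof. by rewrite /sigma_i rmorph1 expr1n. Qed.

Lemma symcoef_id (n j l : nat) : symcoef n j l 1 0 0 1 = (l == j)%:R :> F.
Proof.
by rewrite /symcoef !(polyC0, polyC1) mul0r addr0 add0r mul1r expr1n mul1r coefXn.
Qed.

Lemma rhoSW1 (tt : 'I_f -> int) (ss : 'I_f -> 'I_p) (l j : SWidx ss) :
  rhoSW sigma tt ss 1%:M l j = (l == j)%:R.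
Proof.
rewrite /rhoSW det1.
under eq_bigr => i _.
  by rewrite !mxE /= sigma_i1 sigma_i0 exp1rz mul1r symcoef_id over.
have [<- | ne] := eqVneq l j; first by rewrite big1 // => i _; rewrite eqxx.
have [i li] : exists i, (val l i : nat) != val j i.
  apply/existsP; apply: contraR ne => /existsPn lj.
  by apply/eqP/val_inj/ffunP => i; apply/val_inj/eqP; rewrite -[_ == _]negbK lj.
by rewrite (bigD1 i) //= (negbTE li) mul0r.
Qed.

Local Notation act := (actHom sigma t t' s s').

Lemma actHom_K1 : {in K1modK2 k, forall n phi, act n phi = phi}.
Proof.
move=> n; rewrite inE => /eqP n1 phi.
have n1' : red (n^-1)%g = 1%:M.
  by rewrite (@eq_red_invg _ n 1%g) ?invg1 ?red1 // n1 red1.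
apply/ffunP => -[x1 x2]; rewrite ffunE n1 n1' /= (bigD1 x1) //=.
rewrite [X in _ + X]big1 => [|l' ne]; last first.
  by apply: big1 => l _; rewrite !rhoSW1 eq_sym (negbTE ne) !mul0r.
rewrite addr0 (bigD1 x2) //= [X in _ + X]big1 => [|l ne]; last first.
  by rewrite !rhoSW1 (negbTE ne) mulr0.
by rewrite addr0 !rhoSW1 !eqxx mul1r mulr1.
Qed.

Lemma actHom_red (g h : GL2mod2 k) : red g = red h -> act g =1 act h.
Proof. by move=> gh phi; rewrite /actHom (eq_red_invg gh) gh. Qed.

Lemma actHom0 (g : GL2mod2 k) : act g 0 = 0.
Proof.
apply/ffunP => x; rewrite !ffunE big1 // => l' _.
by rewrite big1 // => l _; rewrite ffunE mulr0 mul0r.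
Qed.

End SerreWeightAction.

Theorem proposition2p8
  (p : nat) (p_prime : prime p)
  (F : closedFieldType) (charF : p \in [pchar F])
  (F_alg_over_Fp : forall x : F, exists n : nat, (0 < n)%N /\ x ^+ (p ^ n) = x)
  (k : finFieldType) (f : nat) (f_gt0 : (0 < f)%N) (card_k : #|k| = (p ^ f)%N)
  (sigma : {rmorphism k -> F})
  (t t' : 'I_f -> int) (s s' : 'I_f -> 'I_p) :
  res_split_surjective (actHom sigma t t' s s')
    [set: GL2mod2 k] (K1modK2 k).
Proof.
apply: (@res_split_surjective_retraction _ _ _ _ _ (liftGL_morphism k)).
- exact: liftGL_K1.
- exact: mulgV_liftGL_K1.
- exact: (@actHom_K1 _ _ sigma _ _ (prime_gt0 p_prime) t t' s s').
- by move=> g; apply: actHom_red; rewrite red_liftGL.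
- exact: actHom0.
Qed.
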